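(* Let $m\ge 2$ be an integer and let $C=uRM(m)\subseteq \mathbb{F}_2^{2^m}$ be the classical binary linear code defined in the context (the code cut out by the weight-4 bulk checks and the boundary checks $S(w,t)$ on a $2^b\times 2^a$ grid). Then $C$ is equivalent, up to a permutation of coordinates, to the first-order Reed–Muller code $RM(1,m)$; in particular $C$ has parameters $[n,k,d]=[2^m,\,m+1,\,2^{m-1}]$.
   Context: Let $a=\lceil m/2\rceil$ and $b=\lfloor m/2\rfloor$, so $a+b=m$. Place $2^m$ bits on a rectangular grid with $2^b$ rows and $2^a$ columns; bits are indexed by grid positions $(i,j)$, $1\le i\le 2^b$, $1\le j\le 2^a$, with row $i=1$ the top row and column $j=1$ the leftmost column. A check is a subset of grid positions; a vector $x\in\mathbb{F}_2^{2^m}$ satisfies the check if the sum of $x$ over that subset is $0$ mod 2. Bulk checks: for every $1\le i<2^b$, $1\le j<2^a$, the 4-element set $\{(i,j),(i+1,j),(i,j+1),(i+1,j+1)\}$. Boundary checks: for a line of $L=2^n$ positions labelled $1,\dots,L$, and for each $s\in\{1,\dots,n-1\}$, $w=2^s$, and each integer $t$ with $-L/(2w)+1\le t\le L/(2w)-1$, define the 4-element set $S(w,t)=\{L/2-w/2+wt,\ L/2-w/2+wt+1,\ L/2+w/2+wt,\ L/2+w/2+wt+1\}$. The horizontal boundary checks are the sets $S(w,t)$ (with $n=a$) placed on the top row (position $j$ of the line being $(1,j)$); the vertical boundary checks are the sets $S(w,t)$ (with $n=b$) placed on the leftmost column (position $i$ of the line being $(i,1)$). $uRM(m)$ is the set of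 all $x\in\mathbb{F}_2^{2^m}$ satisfying all bulk and boundary checks. $RM(1,m)$ is the binary code of length $2^m$ consisting of the evaluation vectors $(c_0+c\cdot v)_{v\in\mathbb{F}_2^m}$ over all $c_0\in\mathbb{F}_2$, $c\in\mathbb{F}_2^m$. *)

From HB Require Import structures.
From mathcomp Require Import all_boot all_order all_algebra.
From mathcomp Require Import boolp.
Set Implicit Arguments. Unset Strict Implicit. Unset Printing Implicit Defensive.
Import Order.TTheory GRing.Theory Num.Theory.
Local Open Scope ring_scope.

(* a = ceil(m/2) (number of column bits), b = floor(m/2) (number of row bits) *)
Definition acol (m : nat) : nat := uphalf m.
Definition brow (m : nat) : nat := m./2.

(* Grid positions, 0-indexed: (i-1, j-1) for the paper's (i, j),
   with 2^b rows and 2^a columns. *)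
Definition Grid (m : nat) : finType :=
  ('I_(2 ^ brow m) * 'I_(2 ^ acol m))%type.

Definition gvec (m : nat) := {ffun Grid m -> 'F_2}.

Definition satisfies (T : finType) (x : {ffun T -> 'F_2}) (S : {set T}) : Prop :=
  \sum_(p in S) x p = 0.

Definition bulk_check (m : nat) (i j : nat) : {set Grid m} :=
  [set p : Grid m | ((p.1 : nat) == i) || ((p.1 : nat) == i.+1)
                  & ((p.2 : nat) == j) || ((p.2 : nat) == j.+1)].

(* The four (1-indexed, integer) line positions of S(w,t) on a line of length L. *)
Definition Sline (L w : nat) (t : int) : seq int :=
  [:: (L %/ 2)%:Z - (w %/ 2)%:Z + w%:Z * t;
      (L %/ 2)%:Z - (w %/ 2)%:Z + w%:Z * t + 1;
      (L %/ 2)%:Z + (w %/ 2)%:Z + w%:Z * t;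
      (L %/ 2)%:Z + (w %/ 2)%:Z + w%:Z * t + 1].

Definition t_range (L w : nat) (t : int) : Prop :=
  - ((L %/ (2 * w))%:Z) + 1 <= t /\ t <= (L %/ (2 * w))%:Z - 1.

Definition hcheck (m : nat) (w : nat) (t : int) : {set Grid m} :=
  [set p : Grid m | ((p.1 : nat) == 0%N)
                  & ((p.2 : nat).+1)%:Z \in Sline (2 ^ acol m) w t].

Definition vcheck (m : nat) (w : nat) (t : int) : {set Grid m} :=
  [set p : Grid m | ((p.2 : nat) == 0%N)
                  & ((p.1 : nat).+1)%:Z \in Sline (2 ^ brow m) w t].

Definition in_uRM (m : nat) (x : gvec m) : Prop :=
  [/\ (forall i j : nat, (i.+1 < 2 ^ brow m)%N -> (j.+1 < 2 ^ acol m)%N ->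
         satisfies x (bulk_check m i j)),
      (forall (s : nat) (t : int), (1 <= s)%N -> (s <= (acol m).-1)%N ->
         t_range (2 ^ acol m) (2 ^ s) t -> satisfies x (hcheck m (2 ^ s) t))
    & (forall (s : nat) (t : int), (1 <= s)%N -> (s <= (brow m).-1)%N ->
         t_range (2 ^ brow m) (2 ^ s) t -> satisfies x (vcheck m (2 ^ s) t))].

Definition uRM (m : nat) : {set gvec m} := [set x | `[< in_uRM x >]].

Definition RM1vec (m : nat) (c0 : 'F_2) (c : 'rV['F_2]_m) : {ffun 'rV['F_2]_m -> 'F_2} :=
  [ffun v : 'rV['F_2]_m => c0 + \sum_(k < m) c ord0 k * v ord0 k].

Definition in_RM1 (m : nat) (y : {ffun 'rV['F_2]_m -> 'F_2}) : Prop :=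
  exists c0 c, y = RM1vec c0 c.

Definition wt (T : finType) (x : {ffun T -> 'F_2}) : nat := #|[set p | x p != 0]|.

(* Send the grid position (i, j) to the concatenated Gray codes of i and j.
   Incrementing an index p flips exactly its Gray bit number [logn 2 p], so a
   function f on a line of length 2^n is affine in the Gray bits iff its discrete
   derivative f(p-1) + f(p) depends only on the 2-adic valuation of p; this is what
   the boundary checks S(w,t) say.  The bulk checks say x(i,j) = x(i,0) + x(0,j) +
   x(0,0).  Hence uRM(m) is the image of RM(1,m) under this relabelling, and the
   parameters are those of RM(1,m): translating by a basis vector on which a
   nonconstant affine function depends swaps its zeros and ones, so it has weight
   2^(m-1). *)

From HB Require Import structures.
From mathcomp Require Import all_boot all_order all_algebra.
From mathcomp Require Import boolp.
From mathcomp Require Import zify.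
Set Implicit Arguments. Unset Strict Implicit. Unset Printing Implicit Defensive.
Import Order.TTheory GRing.Theory Num.Theory.
Local Open Scope ring_scope.

Lemma F2_cases (x : 'F_2) : x = 0 \/ x = 1.
Proof. by case: x => [[|[|//]]] p; [left|right]; apply: val_inj. Qed.

Ltac F2_enum := repeat match goal with |- forall _ : 'F_2, _ =>
  let x := fresh "x" in move=> x; case: (F2_cases x) => -> end;
  first [by apply/eqP | let h := fresh "h" in by move=> /eqP h; apply/eqP; move: h].

Lemma addF2xx (x : 'F_2) : x + x = 0.
Proof. exact: addrr_pchar2 (pchar_Fp (isT : prime 2)) x. Qed.

Lemma oppF2 (x : 'F_2) : - x = x.
Proof. exact: oppr_pchar2 (pchar_Fp (isT : prime 2)) x. Qed.

Lemma addF2_eq0 (a b : 'F_2) : (a + b = 0) <-> (a = b).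
Proof. by split=> [ab|->]; [apply/eqP; rewrite -subr_eq0 oppF2 ab | exact: addF2xx]. Qed.

Lemma natF2 (n : nat) : n%:R = (odd n)%:R :> 'F_2.
Proof. by rewrite -modn2 Fp_nat_mod. Qed.

Lemma natF2_inj a b : a%:R = b%:R :> 'F_2 -> odd a = odd b.
Proof. by rewrite (natF2 a) (natF2 b); case: (odd a); case: (odd b) => // /eqP. Qed.

Lemma logn2_odd_mul u e : odd u -> logn 2 (u * 2 ^ e) = e.
Proof. by move=> u_odd; rewrite logn_Gauss ?coprime2n ?pfactorK. Qed.

Lemma logn2_lt p n : (0 < p < 2 ^ n)%N -> (logn 2 p < n)%N.
Proof.
case/andP=> p_gt0 lt_p; rewrite -(ltn_exp2l _ _ (ltnSn 1)).
by apply: leq_ltn_trans lt_p; apply: dvdn_leq p_gt0 (pfactor_dvdnn 2 p).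
Qed.

(* Since [k%:R : 'F_2] is the parity of [k], [(i %/ 2 ^ l)%:R] is the [l]-th
   binary digit of [i], and [gray_bit i l] the [l]-th digit of its reflected
   binary Gray code. *)
Definition gray_bit (i l : nat) : 'F_2 := (i %/ 2 ^ l)%:R + (i %/ 2 ^ l.+1)%:R.

Lemma gray_bit0 l : gray_bit 0 l = 0.
Proof. by rewrite /gray_bit !div0n addr0. Qed.

Lemma gray_bitS i l : gray_bit i.+1 l = gray_bit i l + (l == logn 2 i.+1)%:R.
Proof.
rewrite /gray_bit !divnS ?expn_gt0 // !pfactor_dvdn // !natrD.
rewrite addrACA addrC; congr (_ + _).
by case: ltngtP; rewrite ?addF2xx ?addr0.
Qed.

Lemma binary_digits_inj n i i' : (i < 2 ^ n)%N -> (i' < 2 ^ n)%N ->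
  (forall k, (k < n)%N -> (i %/ 2 ^ k)%:R = (i' %/ 2 ^ k)%:R :> 'F_2) -> i = i'.
Proof.
elim: n i i' => [|n IHn] i i' lt_i lt_i' eq_digits.
  by move: lt_i lt_i'; rewrite expn0 !ltnS !leqn0 => /eqP-> /eqP->.
have /natF2_inj eq_odd := eq_digits 0%N isT; rewrite !divn1 in eq_odd.
suff eq_half : i./2 = i'./2 by rewrite -[i]odd_double_half -[i']odd_double_half eq_odd eq_half.
apply: IHn; rewrite -?divn2 ?ltn_divLR -?expnSr // => k lt_kn.
by have := eq_digits k.+1 lt_kn; rewrite expnS !divnMA.
Qed.

Lemma digit_gray_sum n i k : (i < 2 ^ n)%N -> (k <= n)%N ->
  (i %/ 2 ^ k)%:R = \sum_(k <= l < n) gray_bit i l.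
Proof.
move=> lt_i le_kn; rewrite (telescope_sumr_eq (fun l => (i %/ 2 ^ l)%:R)) //.
  by rewrite (divn_small lt_i) sub0r oppF2.
by move=> l _; rewrite oppF2 addrC.
Qed.

Lemma gray_bit_inj n i i' : (i < 2 ^ n)%N -> (i' < 2 ^ n)%N ->
  (forall l, (l < n)%N -> gray_bit i l = gray_bit i' l) -> i = i'.
Proof.
move=> lt_i lt_i' eq_gray; apply: (binary_digits_inj lt_i lt_i') => k lt_kn.
rewrite (digit_gray_sum lt_i (ltnW lt_kn)) (digit_gray_sum lt_i' (ltnW lt_kn)).
by apply: eq_big_nat => l /andP[_ lt_ln]; rewrite eq_gray.
Qed.

(** * Lines closed under the boundary checks *)

Lemma sum_mul_eq_nat (R : nzSemiRingType) n (F : nat -> R) e : (e < n)%N ->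
  \sum_(l < n) F l * (l == e :> nat)%:R = F e.
Proof.
move=> lt_en; transitivity (\sum_(l < n | l == e :> nat) F l).
  by rewrite [RHS]big_mkcond; apply: eq_bigr => l _; case: eqP; rewrite ?mulr1 ?mulr0.
by rewrite big_ord1_eq lt_en.
Qed.

Definition line_diff (f : nat -> 'F_2) (p : nat) : 'F_2 := f p.-1 + f p.

(* Reparametrized by [t = v + 1 - 2 ^ (n - e - 2)], the check [S(2 ^ e.+1, t)] on a
   line of length [2 ^ n] covers the 0-indexed positions [q.-1, q, q'.-1, q'] with
   [q = (2v+1) 2^e] and [q' = (2v+3) 2^e]. *)
Definition line_closed (n : nat) (f : nat -> 'F_2) : Prop :=
  forall e v, ((2 * v + 3) * 2 ^ e < 2 ^ n)%N ->
  line_diff f ((2 * v + 1) * 2 ^ e) = line_diff f ((2 * v + 3) * 2 ^ e).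

Section GrayAffineLine.

Variables (n : nat) (c0 : 'F_2) (c : nat -> 'F_2) (f : nat -> 'F_2).
Hypothesis f_gray : forall k, (k < 2 ^ n)%N -> f k = c0 + \sum_(l < n) c l * gray_bit k l.

Lemma line_diff_gray_affine p : (0 < p < 2 ^ n)%N ->
  line_diff f p = \sum_(l < n) c l * (l == logn 2 p :> nat)%:R.
Proof.
case: p => // p /andP[_ lt_p]; rewrite /line_diff /= !f_gray ?(ltnW lt_p) //.
under [in X in _ + X]eq_bigr do rewrite gray_bitS mulrDr.
by rewrite big_split /= addrACA addF2xx add0r addrA addF2xx add0r.
Qed.

Lemma gray_affine_line_closed : line_closed n f.
Proof.
move=> e v lt_q'; have lt_q : ((2 * v + 1) * 2 ^ e < 2 ^ n)%N.
  by apply: leq_ltn_trans lt_q'; rewrite leq_pmul2r ?expn_gt0 ?leq_add2l.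
have q_gt0 k : (0 < (2 * v + k.+1) * 2 ^ e)%N by rewrite muln_gt0 expn_gt0 addnS.
by rewrite !line_diff_gray_affine ?q_gt0 ?lt_q ?lt_q' // !logn2_odd_mul // oddD oddM.
Qed.

End GrayAffineLine.

Section ClosedLine.

Variables (n : nat) (f : nat -> 'F_2).
Hypothesis closed_f : line_closed n f.

Lemma line_diff_odd_mul v e : ((2 * v + 1) * 2 ^ e < 2 ^ n)%N ->
  line_diff f ((2 * v + 1) * 2 ^ e) = line_diff f (2 ^ e).
Proof.
elim: v => [|v IHv] lt_p; first by rewrite mul1n.
rewrite (_ : (2 * v.+1 + 1 = 2 * v + 3)%N) in lt_p *; last by lia.
rewrite -closed_f // IHv //; apply: leq_ltn_trans lt_p.
by rewrite leq_pmul2r ?expn_gt0 ?leq_add2l.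
Qed.

Lemma line_diff_valuation p : (0 < p < 2 ^ n)%N ->
  line_diff f p = line_diff f (2 ^ logn 2 p).
Proof.
case/andP=> p_gt0 lt_p; have [u u_odd def_p] := pfactor_coprime (isT : prime 2) p_gt0.
rewrite coprime2n in u_odd.
have def_u : u = (2 * u./2 + 1)%N by rewrite -[u in LHS]odd_double_half u_odd addnC -mul2n.
by rewrite def_p def_u line_diff_odd_mul -?def_u -?def_p.
Qed.

Lemma line_closed_gray_expansion j : (j < 2 ^ n)%N ->
  f j = f 0%N + \sum_(l < n) line_diff f (2 ^ l) * gray_bit j l.
Proof.
elim: j => [|j IHj] lt_j.
  by rewrite big1 ?addr0 // => l _; rewrite gray_bit0 mulr0.
have -> : f j.+1 = f j + line_diff f j.+1 by rewrite /line_diff /= addrA addF2xx add0r.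
have lt_v : (logn 2 j.+1 < n)%N by apply: logn2_lt; rewrite ltn0Sn.
rewrite IHj 1?ltnW // line_diff_valuation // -addrA; congr (_ + _).
under [in RHS]eq_bigr do rewrite gray_bitS mulrDr.
by rewrite big_split /= (sum_mul_eq_nat (fun l => line_diff f (2 ^ l))).
Qed.

End ClosedLine.

Definition bulk_closed (A B : nat) (X : nat -> nat -> 'F_2) : Prop :=
  forall i j, (i.+1 < A)%N -> (j.+1 < B)%N ->
  X i j + X i j.+1 + X i.+1 j + X i.+1 j.+1 = 0.

Lemma separable_bulk_closed A B X (al be : nat -> 'F_2) :
  (forall i j, (i < A)%N -> (j < B)%N -> X i j = al i + be j) -> bulk_closed A B X.
Proof.
move=> def_X i j lt_i lt_j; rewrite !def_X ?(ltnW lt_i) ?(ltnW lt_j) //.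
by move: (al i) (al i.+1) (be j) (be j.+1); F2_enum.
Qed.

Section BulkClosed.

Variables (A B : nat) (X : nat -> nat -> 'F_2).
Hypothesis closed_X : bulk_closed A B X.

Lemma bulk_closed_row_diff i j : (i.+1 < A)%N -> (j < B)%N ->
  X i.+1 j + X i j = X i.+1 0%N + X i 0%N.
Proof.
move=> lt_i; elim: j => [//|j IHj] lt_j; rewrite -IHj 1?ltnW //.
have := closed_X lt_i lt_j; move: (X i j) (X i j.+1) (X i.+1 j) (X i.+1 j.+1).
by F2_enum.
Qed.

Lemma bulk_closed_separable i j : (i < A)%N -> (j < B)%N ->
  X i j = X i 0%N + X 0%N j + X 0%N 0%N.
Proof.
elim: i => [|i IHi] lt_i lt_j; first by rewrite addrC addrA addF2xx add0r.
have := bulk_closed_row_diff lt_i lt_j; rewrite IHi ?(ltnW lt_i) //.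
by move: (X i.+1 j) (X i.+1 0%N) (X i 0%N) (X 0%N j) (X 0%N 0%N); F2_enum.
Qed.

End BulkClosed.

(** * The checks of uRM(m) in grid coordinates *)

Lemma odd_mul_lt_exp n e v : ((2 * v + 3) * 2 ^ e < 2 ^ n)%N -> (e.+1 < n)%N.
Proof.
move=> lt_q; rewrite -(ltn_exp2l _ _ (ltnSn 1)); apply: leq_ltn_trans lt_q.
by rewrite expnS leq_pmul2r ?expn_gt0 //; lia.
Qed.

Definition check_positions (e v : nat) : seq nat :=
  let q := ((2 * v + 1) * 2 ^ e)%N in let q' := ((2 * v + 3) * 2 ^ e)%N in
  [:: q.-1; q; q'.-1; q'].

Lemma Sline_odd_mul n e v : (e.+1 < n)%N ->
  Sline (2 ^ n) (2 ^ e.+1) ((v.+1)%:Z - (2 ^ (n - e.+2))%:Z) =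
  [seq (k.+1)%:Z | k <- check_positions e v].
Proof.
move=> lt_en; have [k ->] : exists k, n = (e.+2 + k)%N by exists (n - e.+2)%N; lia.
rewrite addKn /Sline /check_positions /= expnD !expnS.
have P_gt0 : (0 < 2 ^ e)%N by rewrite expn_gt0.
move: (2 ^ e)%N (2 ^ k)%N P_gt0 => P K P_gt0.
rewrite !mulnA !mulKn // !prednK ?muln_gt0 ?P_gt0 ?addn1 ?addn3 //.
congr [:: _; _; _; _]; lia.
Qed.

Lemma t_range_odd_mul n e t : (e.+1 < n)%N ->
  t_range (2 ^ n) (2 ^ e.+1) t <->
  exists2 v, t = (v.+1)%:Z - (2 ^ (n - e.+2))%:Z & ((2 * v + 3) * 2 ^ e < 2 ^ n)%N.
Proof.
move=> lt_en; have [k ->] : exists k, n = (e.+2 + k)%N by exists (n - e.+2)%N; lia.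
rewrite addKn /t_range expnD !expnS mulKn ?muln_gt0 ?expn_gt0 //.
have lt_iff v : ((2 * v + 3) * 2 ^ e < 2 * (2 * 2 ^ e) * 2 ^ k)%N = (2 * v + 3 < 4 * 2 ^ k)%N.
  by rewrite mulnA mulnAC ltn_pmul2r ?expn_gt0.
move: (2 ^ k)%N lt_iff => K lt_iff; split.
  by case=> lo hi; exists (absz (t + K%:Z - 1)%R); rewrite ?lt_iff; lia.
by case=> v ->; rewrite lt_iff; lia.
Qed.

Lemma check_positions_lt n e v : ((2 * v + 3) * 2 ^ e < 2 ^ n)%N ->
  uniq (check_positions e v) && all (fun k => k < 2 ^ n)%N (check_positions e v).
Proof.
rewrite /check_positions /= (_ : (2 * v + 3) * 2 ^ e = (2 * v + 1) * 2 ^ e + 2 * 2 ^ e)%N;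
  last by rewrite -mulnDl -addnA.
have q_gt0 : (0 < (2 * v + 1) * 2 ^ e)%N by rewrite muln_gt0 expn_gt0 addn1.
have P_gt0 : (0 < 2 ^ e)%N by rewrite expn_gt0.
move: ((2 * v + 1) * 2 ^ e)%N (2 ^ e)%N q_gt0 P_gt0 => q P q_gt0 P_gt0.
by rewrite !inE; lia.
Qed.

Lemma boundary_checks_line_closed (T : finType) (x : {ffun T -> 'F_2}) n
    (check : nat -> int -> {set T}) (f : nat -> 'F_2) :
  (forall e v, ((2 * v + 3) * 2 ^ e < 2 ^ n)%N ->
     \sum_(p in check (2 ^ e.+1)%N ((v.+1)%:Z - (2 ^ (n - e.+2))%:Z)) x p =
     line_diff f ((2 * v + 1) * 2 ^ e) + line_diff f ((2 * v + 3) * 2 ^ e)) ->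
  (forall s t, (1 <= s)%N -> (s <= n.-1)%N -> t_range (2 ^ n) (2 ^ s) t ->
     satisfies x (check (2 ^ s)%N t)) <-> line_closed n f.
Proof.
move=> check_sum; split.
  move=> sat_x e v lt_q'; have lt_en := odd_mul_lt_exp lt_q'.
  apply/addF2_eq0; rewrite -check_sum //; apply: sat_x => //; first by lia.
  by apply/t_range_odd_mul => //; exists v.
move=> closed_f [//|e] t _ le_en /t_range_odd_mul[]; first by lia.
by move=> v -> lt_q'; rewrite /satisfies check_sum //; apply/addF2_eq0/closed_f.
Qed.

Definition entry m (x : gvec m) (i j : nat) : 'F_2 :=
  if (insub i : option 'I_(2 ^ brow m)) is Some i' then
    if (insub j : option 'I_(2 ^ acol m)) is Some j' then x (i', j') else 0
  else 0.

Lemma entryE m (x : gvec m) (p : Grid m) : entry x p.1 p.2 = x p.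
Proof. by case: p => i j; rewrite /entry !valK. Qed.

Lemma sum_ord_in_seq (R : nmodType) N (F : nat -> R) (s : seq nat) :
  uniq s -> all (fun k => k < N)%N s -> \sum_(i < N | (i : nat) \in s) F i = \sum_(k <- s) F k.
Proof.
move=> uniq_s /allP lt_s; rewrite -big_mkord -big_filter; apply/perm_big/uniq_perm.
- by rewrite filter_uniq // iota_uniq.
- by [].
move=> k; rewrite mem_filter mem_index_iota leq0n.
by apply/andP/idP => [[]|ks] //; split; last exact: lt_s.
Qed.

Lemma sum_grid_rect m (x : gvec m) (rows cols : seq nat) :
  uniq rows -> uniq cols -> all (fun i => i < 2 ^ brow m)%N rows ->
  all (fun j => j < 2 ^ acol m)%N cols ->
  \sum_(p in [set p : Grid m | ((p.1 : nat) \in rows) & ((p.2 : nat) \in cols)]) x p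
  = \sum_(i <- rows) \sum_(j <- cols) entry x i j.
Proof.
move=> uniq_r uniq_c lt_r lt_c.
transitivity (\sum_(p : 'I_(2 ^ brow m) * 'I_(2 ^ acol m) |
                ((p.1 : nat) \in rows) && ((p.2 : nat) \in cols)) x (p.1, p.2)).
  by apply: eq_big => [p|[i j] _]; rewrite ?inE.
rewrite -(pair_big (fun i : 'I__ => (i : nat) \in rows) (fun j : 'I__ => (j : nat) \in cols)
  (fun i j => x (i, j))) -(sum_ord_in_seq _ uniq_r lt_r).
apply: eq_bigr => i _; rewrite -(sum_ord_in_seq _ uniq_c lt_c).
by apply: eq_bigr => j _; rewrite -[x _](entryE x (i, j)).
Qed.

Lemma bulk_check_sum m (x : gvec m) i j : (i.+1 < 2 ^ brow m)%N -> (j.+1 < 2 ^ acol m)%N ->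
  \sum_(p in bulk_check m i j) x p =
  entry x i j + entry x i j.+1 + entry x i.+1 j + entry x i.+1 j.+1.
Proof.
move=> lt_i lt_j; rewrite (_ : bulk_check m i j =
  [set p : Grid m | ((p.1 : nat) \in [:: i; i.+1]) & ((p.2 : nat) \in [:: j; j.+1])]).
  rewrite sum_grid_rect /= ?inE ?neq_ltn ?ltnSn ?lt_i ?lt_j ?(ltnW lt_i) ?(ltnW lt_j) //.
  by rewrite !big_cons !big_nil !addr0 !addrA.
by apply/setP => p; rewrite !inE.
Qed.

Lemma Posz_succ_inj : injective (fun k : nat => (k.+1)%:Z).
Proof. by move=> k1 k2 [->]. Qed.

Lemma hcheck_sum m (x : gvec m) e v : ((2 * v + 3) * 2 ^ e < 2 ^ acol m)%N ->
  \sum_(p in hcheck m (2 ^ e.+1) ((v.+1)%:Z - (2 ^ (acol m - e.+2))%:Z)) x p =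
  line_diff (entry x 0%N) ((2 * v + 1) * 2 ^ e) + line_diff (entry x 0%N) ((2 * v + 3) * 2 ^ e).
Proof.
move=> lt_q'; have /andP[uniq_q lt_q] := check_positions_lt lt_q'.
rewrite (_ : hcheck _ _ _ = [set p : Grid m | ((p.1 : nat) \in [:: 0%N]) &
                                             ((p.2 : nat) \in check_positions e v)]).
  rewrite sum_grid_rect //; last by rewrite /= expn_gt0.
  by rewrite !big_cons !big_nil !addr0 !addrA.
apply/setP => p; rewrite /hcheck !in_set Sline_odd_mul ?(odd_mul_lt_exp lt_q') //.
by rewrite (mem_map Posz_succ_inj) mem_seq1.
Qed.

Lemma vcheck_sum m (x : gvec m) e v : ((2 * v + 3) * 2 ^ e < 2 ^ brow m)%N ->
  \sum_(p in vcheck m (2 ^ e.+1) ((v.+1)%:Z - (2 ^ (brow m - e.+2))%:Z)) x p =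
  line_diff (entry x ^~ 0%N) ((2 * v + 1) * 2 ^ e) +
  line_diff (entry x ^~ 0%N) ((2 * v + 3) * 2 ^ e).
Proof.
move=> lt_q'; have /andP[uniq_q lt_q] := check_positions_lt lt_q'.
rewrite (_ : vcheck _ _ _ = [set p : Grid m | ((p.1 : nat) \in check_positions e v) &
                                             ((p.2 : nat) \in [:: 0%N])]).
  rewrite sum_grid_rect //; last by rewrite /= expn_gt0.
  by rewrite !big_cons !big_nil !addr0 !addrA.
apply/setP => p; rewrite /vcheck !in_set Sline_odd_mul ?(odd_mul_lt_exp lt_q') //.
by rewrite (mem_map Posz_succ_inj) mem_seq1 andbC.
Qed.

Lemma in_uRM_iff m (x : gvec m) : in_uRM x <->
  [/\ bulk_closed (2 ^ brow m) (2 ^ acol m) (entry x),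
      line_closed (acol m) (entry x 0%N) & line_closed (brow m) (entry x ^~ 0%N)].
Proof.
have hclosed := boundary_checks_line_closed (hcheck_sum x).
have vclosed := boundary_checks_line_closed (vcheck_sum x).
have bclosed : (forall i j, (i.+1 < 2 ^ brow m)%N -> (j.+1 < 2 ^ acol m)%N ->
    satisfies x (bulk_check m i j)) <-> bulk_closed (2 ^ brow m) (2 ^ acol m) (entry x).
  split=> closed_x i j lt_i lt_j; have := closed_x i j lt_i lt_j;
  by rewrite /satisfies bulk_check_sum.
by split=> -[/bclosed ? /hclosed ? /vclosed ?].
Qed.

(** * The Gray-code relabelling of the grid *)

Lemma brow_add_acol m : (brow m + acol m)%N = m.
Proof. by rewrite /brow /acol uphalf_half addnCA addnn odd_double_half. Qed.

Lemma brow_ltn m l : (l < brow m)%N -> (l < m)%N.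
Proof. by move=> lt_l; rewrite -(brow_add_acol m) ltn_addr. Qed.

Lemma brow_add_ltn m l : (l < acol m)%N -> (brow m + l < m)%N.
Proof. by rewrite -{3}(brow_add_acol m) ltn_add2l. Qed.

Lemma sum_ord_brow_acol (R : nmodType) m (F : nat -> R) :
  \sum_(k < m) F k = \sum_(l < brow m) F l + \sum_(l < acol m) F (brow m + l)%N.
Proof. by rewrite -[in LHS](brow_add_acol m) big_split_ord. Qed.

Definition gray_coord m (p : Grid m) (k : nat) : 'F_2 :=
  if (k < brow m)%N then gray_bit p.1 k else gray_bit p.2 (k - brow m).

Lemma gray_coord_row m (p : Grid m) l : (l < brow m)%N -> gray_coord p l = gray_bit p.1 l.
Proof. by rewrite /gray_coord => ->. Qed.

Lemma gray_coord_col m (p : Grid m) l : gray_coord p (brow m + l) = gray_bit p.2 l.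
Proof. by rewrite /gray_coord ltnNge leq_addr addKn. Qed.

Definition gray_code m (p : Grid m) : 'rV['F_2]_m := \row_(k < m) gray_coord p k.

Definition row_coef m (c : 'rV['F_2]_m) (k : nat) : 'F_2 :=
  if (insub k : option 'I_m) is Some k' then c ord0 k' else 0.

Lemma row_coefE m (c : 'rV['F_2]_m) (k : 'I_m) : row_coef c k = c ord0 k.
Proof. by rewrite /row_coef valK. Qed.

Lemma RM1vec_gray_code m c0 (c : 'rV['F_2]_m) (p : Grid m) :
  RM1vec c0 c (gray_code p) = c0 + \sum_(l < brow m) row_coef c l * gray_bit p.1 l
                                 + \sum_(l < acol m) row_coef c (brow m + l) * gray_bit p.2 l.
Proof.
rewrite ffunE -addrA (eq_bigr (fun k : 'I_m => row_coef c k * gray_coord p k)) => [|k _].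
  rewrite (sum_ord_brow_acol _ (fun k => row_coef c k * gray_coord p k)).
  by congr (_ + (_ + _)); apply: eq_bigr => l _; rewrite ?gray_coord_col ?gray_coord_row.
by rewrite mxE row_coefE.
Qed.

Lemma gray_code_inj m : injective (@gray_code m).
Proof.
move=> [i j] [i' j'] /rowP eq_code; congr pair; apply: val_inj.
  apply: (gray_bit_inj (ltn_ord i) (ltn_ord i')) => l lt_l.
  by have := eq_code (Ordinal (brow_ltn lt_l)); rewrite !mxE !gray_coord_row.
apply: (gray_bit_inj (ltn_ord j) (ltn_ord j')) => l lt_l.
by have := eq_code (Ordinal (brow_add_ltn lt_l)); rewrite !mxE !gray_coord_col.
Qed.

Lemma card_Grid m : #|Grid m| = (2 ^ m)%N.
Proof. by rewrite card_prod !card_ord -expnD brow_add_acol. Qed.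

Lemma gray_code_bij m : bijective (@gray_code m).
Proof.
apply: inj_card_bij (@gray_code_inj m) _.
by rewrite card_Grid card_mx card_Fp // mul1n.
Qed.

Lemma entry_ord m (x : gvec m) i j (lt_i : (i < 2 ^ brow m)%N) (lt_j : (j < 2 ^ acol m)%N) :
  entry x i j = x (Ordinal lt_i, Ordinal lt_j).
Proof. exact: entryE x (Ordinal lt_i, Ordinal lt_j). Qed.

Lemma row_coef_row m (F : nat -> 'F_2) k : (k < m)%N -> row_coef (\row_(i < m) F i) k = F k.
Proof. by move=> lt_km; rewrite (row_coefE _ (Ordinal lt_km)) mxE. Qed.

Lemma RM1vec_gray_in_uRM m c0 (c : 'rV['F_2]_m) :
  in_uRM [ffun p => RM1vec c0 c (gray_code p)].
Proof.
set x := [ffun p => _].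
pose row_part i := \sum_(l < brow m) row_coef c l * gray_bit i l.
pose col_part j := \sum_(l < acol m) row_coef c (brow m + l) * gray_bit j l.
have entry_x i j : (i < 2 ^ brow m)%N -> (j < 2 ^ acol m)%N ->
    entry x i j = c0 + row_part i + col_part j.
  by move=> lt_i lt_j; rewrite (entry_ord x lt_i lt_j) ffunE RM1vec_gray_code.
apply/in_uRM_iff; split.
- by apply: (separable_bulk_closed (al := fun i => c0 + row_part i) (be := col_part)).
- apply: (gray_affine_line_closed (c0 := c0 + row_part 0%N)
                                  (c := fun l => row_coef c (brow m + l))) => j lt_j.
  by rewrite entry_x ?expn_gt0.
- apply: (gray_affine_line_closed (c0 := c0 + col_part 0%N) (c := row_coef c)) => i lt_i.
  by rewrite entry_x ?expn_gt0 // addrAC.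
Qed.

Lemma uRM_gray_in_RM1 m (y : {ffun 'rV['F_2]_m -> 'F_2}) :
  in_uRM [ffun p => y (gray_code p)] -> in_RM1 y.
Proof.
set x := [ffun p => _] => /in_uRM_iff[bulk_x row0_x col0_x].
pose coef k := if (k < brow m)%N then line_diff (entry x ^~ 0%N) (2 ^ k)
               else line_diff (entry x 0%N) (2 ^ (k - brow m)).
exists (entry x 0%N 0%N), (\row_(k < m) coef k); apply/ffunP => v.
have [g gK Kg] := gray_code_bij m; rewrite -(Kg v); case: (g v) => i j.
rewrite RM1vec_gray_code -[y _](ffunE (fun p => y (gray_code p))) -/x -(entryE x (i, j)) /=.
rewrite (bulk_closed_separable bulk_x) // (line_closed_gray_expansion col0_x (ltn_ord i)).
rewrite (line_closed_gray_expansion row0_x (ltn_ord j)) addrACA addF2xx add0r [LHS]addrC addrA.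
congr (_ + _ + _); apply: eq_bigr => l _.
  by rewrite row_coef_row ?(brow_ltn (ltn_ord l)) // /coef ltn_ord.
by rewrite row_coef_row ?(brow_add_ltn (ltn_ord l)) // /coef ltnNge leq_addr addKn.
Qed.

Lemma in_RM1_gray m (y : {ffun 'rV['F_2]_m -> 'F_2}) :
  in_RM1 y <-> in_uRM [ffun p => y (gray_code p)].
Proof. by split=> [[c0 [c ->]]|]; [apply: RM1vec_gray_in_uRM | apply: uRM_gray_in_RM1]. Qed.

(** * Weights of first-order Reed-Muller codewords *)

Lemma wt_eq0 (T : finType) (x : {ffun T -> 'F_2}) : (wt x == 0%N) = (x == 0).
Proof.
rewrite /wt cards_eq0; apply/eqP/eqP => [/setP supp0 | ->].
  by apply/ffunP => p; have := supp0 p; rewrite !inE ffunE => /negbFE/eqP.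
by apply/setP => p; rewrite !inE ffunE eqxx.
Qed.

Section BijectiveRelabelling.

Variables (T U : finType) (sigma : T -> U).
Hypothesis sigma_bij : bijective sigma.

Lemma ffun_comp_inj : injective (fun y : {ffun U -> 'F_2} => [ffun p => y (sigma p)]).
Proof.
have [g _ gK] := sigma_bij; move=> y y' /ffunP eq_y; apply/ffunP => v.
by have := eq_y (g v); rewrite !ffunE gK.
Qed.

Lemma wt_comp (y : {ffun U -> 'F_2}) : wt [ffun p => y (sigma p)] = wt y.
Proof.
rewrite /wt -(on_card_preimset (onW_bij _ sigma_bij)); apply: eq_card => p.
by rewrite !inE ffunE.
Qed.

End BijectiveRelabelling.

(* [tau] maps the support of [y] into its complement and vice versa. *)
Lemma wt_flip (T : finType) (tau : T -> T) (y : {ffun T -> 'F_2}) :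
  injective tau -> (forall v, y (tau v) = y v + 1) -> (wt y).*2 = #|T|.
Proof.
move=> tau_inj y_tau; pose O := [set v | y v != 0].
have tauO v : (tau v \in O) = (v \notin O).
  by rewrite !inE y_tau; case: (F2_cases (y v)) => ->.
have le_card (A B : {set T}) : (forall v, v \in A -> tau v \in B) -> (#|A| <= #|B|)%N.
  move=> AB; rewrite -(card_imset A tau_inj); apply/subset_leq_card/subsetP.
  by move=> _ /imsetP[v Av ->]; apply: AB.
rewrite /wt -/O -addnn -[X in _ = X](cardsC O); congr (_ + _); apply/eqP.
by rewrite eqn_leq !le_card // => v; rewrite ?in_setC tauO ?negbK.
Qed.

Lemma RM1vec_add m c0 (c : 'rV['F_2]_m) v w :
  RM1vec c0 c (v + w) = RM1vec c0 c v + \sum_(k < m) c ord0 k * w ord0 k.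
Proof.
rewrite !ffunE -addrA -big_split; congr (_ + _).
by apply: eq_bigr => k _; rewrite mxE mulrDr.
Qed.

Lemma sum_mul_delta m (c : 'rV['F_2]_m) k :
  \sum_(k' < m) c ord0 k' * @delta_mx 'F_2 1 m ord0 k ord0 k' = c ord0 k.
Proof.
rewrite (bigD1 k) //= mxE !eqxx mulr1 big1 ?addr0 // => k' ne_k'.
by rewrite mxE eqxx (negbTE ne_k') mulr0.
Qed.

Lemma RM1vec_at0 m c0 (c : 'rV['F_2]_m) : RM1vec c0 c 0 = c0.
Proof. by rewrite ffunE big1 ?addr0 // => k _; rewrite mxE mulr0. Qed.

Lemma RM1vec_inj m : injective (fun pc : 'F_2 * 'rV['F_2]_m => RM1vec pc.1 pc.2).
Proof.
move=> [c0 c] [c0' c'] /= /ffunP eq_RM1.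
have eq_c0 : c0 = c0' by have := eq_RM1 0; rewrite !RM1vec_at0.
congr pair => //; apply/rowP => k; have := eq_RM1 (0 + delta_mx 0 k).
by rewrite !RM1vec_add !RM1vec_at0 !sum_mul_delta eq_c0 => /addrI.
Qed.

Lemma wt_RM1vec m c0 (c : 'rV['F_2]_m) : c != 0 -> wt (RM1vec c0 c) = (2 ^ m.-1)%N.
Proof.
case/matrix0Pn=> i [k]; rewrite [i]ord1 => /eqP c_neq0.
have ck : c ord0 k = 1 by case: (F2_cases (c ord0 k)) c_neq0.
have m_gt0 : (0 < m)%N by apply: leq_ltn_trans (ltn_ord k).
apply: double_inj; rewrite (wt_flip (addIr (@delta_mx 'F_2 1 m ord0 k))) => [|v].
  by rewrite card_mx card_Fp // mul1n -mul2n -expnS prednK.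
by rewrite RM1vec_add sum_mul_delta ck.
Qed.

Lemma RM1vec0 m c0 : RM1vec c0 (0 : 'rV['F_2]_m) = [ffun => c0].
Proof. by apply/ffunP => v; rewrite !ffunE big1 ?addr0 // => k _; rewrite mxE mul0r. Qed.

Lemma wt_RM1vec_ge m c0 (c : 'rV['F_2]_m) :
  RM1vec c0 c != 0 -> (2 ^ m.-1 <= wt (RM1vec c0 c))%N.
Proof.
have [-> | /wt_RM1vec -> //] := eqVneq c 0; rewrite RM1vec0 => nz.
have c0_neq0 : c0 != 0 by apply: contraNneq nz => ->; apply/eqP/ffunP => v; rewrite !ffunE.
rewrite /wt (_ : [set v | _] = setT) ?cardsT ?card_mx ?card_Fp ?mul1n ?leq_exp2l ?leq_pred //.
by apply/setP => v; rewrite !inE ffunE.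
Qed.

(** * uRM(m) as the relabelled RM(1,m) *)

Lemma uRMP m (x : gvec m) : reflect (in_uRM x) (x \in uRM m).
Proof. by rewrite inE; apply: asboolP. Qed.

Lemma uRM_gray_image m :
  uRM m = [set [ffun p => RM1vec pc.1 pc.2 (gray_code p)] | pc in [set: 'F_2 * 'rV['F_2]_m]].
Proof.
apply/setP => x; apply/uRMP/imsetP => [x_uRM | [[c0 c] _ ->]]; last exact: RM1vec_gray_in_uRM.
have [g gK _] := gray_code_bij m.
have def_x : x = [ffun p => [ffun v => x (g v)] (gray_code p)].
  by apply/ffunP => p; rewrite !ffunE gK.
rewrite def_x in x_uRM; have [c0 [c def_y]] := uRM_gray_in_RM1 x_uRM.
by exists (c0, c); rewrite // {1}def_x def_y.
Qed.

Lemma card_uRM m : #|uRM m| = (2 ^ m.+1)%N.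
Proof.
rewrite uRM_gray_image card_imset; last first.
  by move=> pc pc' eq_x; apply: RM1vec_inj; apply: (ffun_comp_inj (gray_code_bij m) eq_x).
by rewrite cardsT card_prod card_mx card_Fp // mul1n expnS.
Qed.

Lemma uRM_wt_ge m (x : gvec m) : x \in uRM m -> x != 0 -> (2 ^ m.-1 <= wt x)%N.
Proof.
rewrite uRM_gray_image => /imsetP[[c0 c] _ ->] /=.
rewrite -wt_eq0 !(wt_comp (gray_code_bij m) (RM1vec c0 c)) wt_eq0.
exact: wt_RM1vec_ge.
Qed.

Lemma uRM_wt_witness m : (0 < m)%N ->
  exists2 x : gvec m, x \in uRM m & x != 0 /\ wt x = (2 ^ m.-1)%N.
Proof.
move=> m_gt0; pose e : 'rV['F_2]_m := delta_mx 0 (Ordinal m_gt0).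
have e_neq0 : e != 0 by apply/matrix0Pn; exists 0, (Ordinal m_gt0); rewrite mxE !eqxx.
exists [ffun p => RM1vec 0 e (gray_code p)]; first exact/uRMP/RM1vec_gray_in_uRM.
by rewrite -wt_eq0 (wt_comp (gray_code_bij m) (RM1vec 0 e)) wt_RM1vec // expn_eq0.
Qed.

Theorem theorem1 (m : nat) : (2 <= m)%N ->
  (exists sigma : Grid m -> 'rV['F_2]_m, bijective sigma /\
     forall y : {ffun 'rV['F_2]_m -> 'F_2},
       in_RM1 y <-> in_uRM [ffun p : Grid m => y (sigma p)]) /\
  [/\ #|Grid m| = (2 ^ m)%N,
      #|uRM m| = (2 ^ m.+1)%N,
      (exists2 x : gvec m, x \in uRM m & x != 0 /\ wt x = (2 ^ m.-1)%N)
    & (forall x : gvec m, x \in uRM m -> x != 0 -> (2 ^ m.-1 <= wt x)%N)].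
Proof.
move=> m_ge2; split.
  by exists (@gray_code m); split; [apply: gray_code_bij | apply: in_RM1_gray].
split; [exact: card_Grid | exact: card_uRM | apply: uRM_wt_witness; lia | exact: uRM_wt_ge].
Qed.
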